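(* Let $k\ge 2$ and let $x_1, x_2, \ldots, x_{c}$ be the Nyldon factorization of $\mathit{TM}_{2k-1}$ (so $c$ is its number of factors). Then the Nyldon factorization of $\mathit{TM}_{2k}$ is $$x_1,\ \ldots,\ x_{c-1},\ x_{c}\cdot\overline{\mathit{TM}_{2k-2}}',\ b\cdot \mathit{TM}_{2k-2},$$ and the Nyldon factorization of $\mathit{TM}_{2k+1}$ is $$x_1,\ \ldots,\ x_{c-1},\ x_{c}\cdot\overline{\mathit{TM}_{2k-2}}',\ b\cdot \mathit{TM}_{2k-2}\cdot\overline{\mathit{TM}_{2k}}.$$ (For instance, the Nyldon factorization of $\mathit{TM}_3$ is $a,b,ba,baab$.)
   Context: Strings are over the binary alphabet $\{a,b\}$ ordered by $a \prec b$, and $\prec$ also denotes the induced lexicographic order on strings: $x \prec y$ iff $x$ is a proper prefix of $y$, or there is $i$ with $x[1..i-1]=y[1..i-1]$ and $x[i]\prec y[i]$; $x\preceq y$ means $x\prec y$ or $x=y$. Nyldon words are defined recursively: every string of length $1$ is a Nyldon word; a string $w$ with $|w|\ge 2$ is a Nyldon word iff there is no factorization $w=\gamma_1\cdots\gamma_m$ with $m\ge 2$, each $\gamma_i$ a nonempty Nyldon word, and $\gamma_1\preceq\gamma_2\preceq\cdots\preceq\gamma_m$. Every nonempty string $w$ has a unique factorization $w=\gamma_1\cdots\gamma_m$ into Nyldon words with $\gamma_i\preceq\gamma_{i+1}$ for all $i$; it is called the Nyldon factorization of $w$. For a binary string $w$, $\overline{w}$ is obtained by exchanging $a$ and $b$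 letterwise, and $w'=w[1..|w|-1]$ is $w$ with its last letter removed; $\overline{w}'$ means $(\overline{w})'$. Thue–Morse words: $\mathit{TM}_0=a$ and $\mathit{TM}_k=\mathit{TM}_{k-1}\cdot\overline{\mathit{TM}_{k-1}}$ for $k\ge1$. *)

From mathcomp Require Import all_boot.
Set Implicit Arguments.
Unset Strict Implicit.
Unset Printing Implicit Defensive.

(* Binary alphabet {a,b} encoded as bool: a := false, b := true, so a < b. *)
Notation letter := bool (only parsing).
Definition la : letter := false.
Definition lb : letter := true.
Notation word := (seq letter).

Definition ltl (c d : letter) : bool := ~~ c && d.

Fixpoint lexle (x y : word) : bool :=
  match x, y with
  | [::], _ => true
  | _ :: _, [::] => false
  | c :: x', d :: y' => ltl c d || ((c == d) && lexle x' y')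
  end.

Fixpoint parts (w : word) : seq (seq word) :=
  match w with
  | [::] => [:: [::]]
  | x :: s =>
      flatten [seq (match p with
                    | [::] => [:: [:: [:: x]]]
                    | y :: p' => [:: [:: x] :: p; (x :: y) :: p']
                    end) | p <- parts s]
  end.

(* Nyldon words, following the recursive definition (recursion on length,
   implemented with a fuel argument that is always >= the length). *)
Fixpoint nyl (n : nat) (w : word) : bool :=
  match n with
  | 0 => false
  | n'.+1 =>
      (size w == 1) ||
      ((1 < size w) &&
       ~~ has (fun p => (1 < size p) && all (nyl n') p && sorted lexle p) (parts w))
  end.

Definition nyldon (w : word) : bool := nyl (size w) w.

(* L is the Nyldon factorization of w: nonempty Nyldon factors, concatenating
   to w, in nondecreasing lexicographic order (unique by the paper's theorem). *)
Definition nyldon_fact (w : word) (L : seq word) : Prop :=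
  [/\ flatten L = w, all nyldon L & sorted lexle L].

Definition compl (w : word) : word := map negb w.
Definition dropLast (w : word) : word := take (size w).-1 w.

Fixpoint TM (k : nat) : word :=
  match k with
  | 0 => [:: la]
  | k'.+1 => TM k' ++ compl (TM k')
  end.

(* Write T_j = TM_{2j} and C_j for its complement, so that TM_{2j+1} = T_j C_j,
   T_{j+1} = T_j C_j C_j T_j and C_j = C_j' b.  If L x is the Nyldon factorization of
   T_j C_j, then L, x C_j', b T_j and L, x C_j', b T_j C_{j+1} factor T_{j+1} and
   T_{j+1} C_{j+1}; by uniqueness of Nyldon factorizations they are the Nyldon
   factorizations as soon as the new factors are Nyldon and x C_j' <= b T_j.  The last
   factor x is baab or b T_{j-1} C_j, so every word involved belongs to a finite family of
   words over the blocks T_j, C_j' and b, indexed by the level j.  The family is shown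
   Nyldon at all levels at once by induction on j: u v is Nyldon whenever u is Nyldon,
   v < u, and v is at least the last Nyldon factor of u deprived of its first letter; the
   splittings u v and the comparisons form a certificate checked by computation.

   Uniqueness, and the criterion that c y is Nyldon iff c successively absorbs every
   factor of the Nyldon factorization of y, are proved together by strong induction on
   the length. *)

From mathcomp Require Import all_boot zify.
Set Implicit Arguments. Unset Strict Implicit. Unset Printing Implicit Defensive.

Lemma lexle_refl x : lexle x x.
Proof. by elim: x => //= c x ->; rewrite eqxx orbT. Qed.

Lemma lexle_prefix x y : lexle x (x ++ y).
Proof. by elim: x => //= c x ->; rewrite eqxx orbT. Qed.

Lemma lexle_cat2l p x y : lexle (p ++ x) (p ++ y) = lexle x y.
Proof. by elim: p => //= c p ->; rewrite /ltl eqxx; case: c. Qed.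

Lemma lexle_trans : transitive lexle.
Proof.
move=> y x z; elim: x y z => [|c x IH] [|d y] [|e z] //=; rewrite /ltl.
by case: c; case: d; case: e => //=; rewrite ?orbF ?andbT; apply: IH.
Qed.

Lemma lexle_total x y : lexle x y || lexle y x.
Proof.
elim: x y => [|c x IH] [|d y] //=; rewrite /ltl.
by case: c; case: d => //=; apply: IH.
Qed.

Lemma nlexle_ge x y : ~~ lexle x y -> lexle y x.
Proof. by move=> H; move: (lexle_total x y); rewrite (negbTE H). Qed.

Lemma nlexle_catl x y s : ~~ lexle x y -> ~~ lexle (x ++ s) y.
Proof.
elim: x y => [|c x IH] [|d y] //=; rewrite /ltl.
by case: c; case: d => //=; apply: IH.
Qed.

Lemma sorted_rcons2 (T : Type) (e : rel T) s x y :
  sorted e (rcons (rcons s x) y) = sorted e (rcons s x) && e x y.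
Proof. by rewrite -cats1 cat_rcons sorted_cat_cons /= andbT. Qed.

Lemma sorted_rcons_cat (T : Type) (e : rel T) s1 s2 x y : transitive e ->
  sorted e (rcons s1 x) -> sorted e (y :: s2) -> e x y -> sorted e (rcons s1 x ++ s2).
Proof.
move=> e_tr S1 /= S2 Hxy; rewrite cat_rcons sorted_cat_cons S1 /=.
exact: (path_le e_tr Hxy S2).
Qed.

Lemma sorted_head_rcons (T : Type) (e : rel T) s x : reflexive e -> transitive e ->
  sorted e (rcons s x) -> e (head x s) x.
Proof.
move=> e_refl e_tr; case: s => [|y s] /= Hs; first exact: e_refl.
by move: (order_path_min e_tr Hs); rewrite all_rcons => /andP [].
Qed.

Lemma eq_cat_split (T : eqType) (p s u v : seq T) : p ++ s = u ++ v -> size p <= size u ->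
  exists2 r, u = p ++ r & s = r ++ v.
Proof.
move=> E H; have Hp : p = take (size p) u.
  have := congr1 (take (size p)) E; rewrite take_size_cat // take_cat.
  by case: ltngtP H => // ->; rewrite subnn take0 cats0 take_size.
exists (drop (size p) u); first by rewrite {1}Hp cat_take_drop.
move: E; rewrite -{1}(cat_take_drop (size p) u) -catA -Hp => /eqP.
by rewrite eqseq_cat // => /andP [_ /eqP].
Qed.

(** * Nyldon factorizations *)

Lemma partsP (w : word) p : p \in parts w -> flatten p = w /\ [::] \notin p.
Proof.
elim: w p => [|x s IH] p /=; first by rewrite inE => /eqP ->.
case/flatten_mapP=> q /IH [Hq Hn]; case: q Hq Hn => [|y q'] Hq Hn.
  by rewrite inE => /eqP ->; subst s.
rewrite !inE => /orP [] /eqP ->; subst s => /=; split=> //;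
  by move: Hn; rewrite !in_cons !negb_or => /andP [H1 H2]; rewrite ?H1 ?H2.
Qed.

Lemma mem_parts (w : word) (p : seq word) :
  flatten p = w -> [::] \notin p -> p \in parts w.
Proof.
elim: w p => [|x s IH] [|l p] //=.
- by case: l => // _; rewrite in_cons eqxx.
case: l => [|y l]; first by rewrite in_cons eqxx.
rewrite /= in_cons negb_or => [[<- Hs]] /andP [_ Hn].
apply/flatten_mapP; case: l Hs => [|z l] Hs /=.
  exists p; first exact: IH.
  by case: p {Hs Hn IH} => [|q p]; rewrite !inE eqxx.
exists ((z :: l) :: p); first by apply: IH => //; rewrite in_cons negb_or Hn.
by rewrite !inE eqxx orbT.
Qed.

Lemma size_mem_flatten_lt (T : eqType) (p : seq (seq T)) x :
  [::] \notin p -> 1 < size p -> x \in p -> size x < size (flatten p).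
Proof.
move=> Hn Hs Hx; move: Hn Hs; case/splitPr: Hx => p1 p2.
rewrite flatten_cat /= !size_cat.
case: p1 => [|y p1] /=.
  case: p2 => [|z p2] //; rewrite !inE !negb_or => /andP [_ /andP [Hz _]] _.
  by rewrite size_cat; case: z Hz => // ? ? _; rewrite /= addnS ltnS leq_addr.
rewrite !inE !negb_or => /andP [Hy _] _; case: y Hy => // ? ? _.
rewrite /= size_cat /=; lia.
Qed.

Lemma size_mem_flatten (T : eqType) (L : seq (seq T)) g : g \in L -> size g <= size (flatten L).
Proof.
by case/splitPr=> L1 L2; rewrite flatten_cat size_cat /= size_cat addnCA leq_addr.
Qed.

Lemma nyl_fuel n m w : size w <= n -> size w <= m -> nyl n w = nyl m w.
Proof.
elim: n m w => [|n IH] [|m] w //=; [by case: w | by case: w |].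
move=> Hn Hm; congr (_ || (_ && ~~ _)); apply: eq_in_has => p /partsP [Hf Hp].
case Hs: (1 < size p) => //=; congr (_ && _); apply: eq_in_all => x Hx.
have := size_mem_flatten_lt Hp Hs Hx; rewrite Hf => Hlt.
by apply: IH; rewrite -ltnS (leq_trans Hlt).
Qed.

Lemma nylS n w : nyl n.+1 w = (size w == 1) ||
  ((1 < size w) && ~~ has (fun p => (1 < size p) && all (nyl n) p && sorted lexle p) (parts w)).
Proof. by []. Qed.

Lemma nyldonE w : 1 < size w ->
  nyldon w = ~~ has (fun p => (1 < size p) && all nyldon p && sorted lexle p) (parts w).
Proof.
rewrite /nyldon; case: w => [|x [|y w]] // _.
rewrite [size _]/= nylS orFb andTb; congr (~~ _); apply: eq_in_has => p /partsP [Hf Hp].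
case Hs: (1 < size p) => //; rewrite !andTb; congr (_ && _); apply: eq_in_all => z Hz.
have := size_mem_flatten_lt Hp Hs Hz; rewrite Hf => Hlt.
by apply: nyl_fuel; [exact: Hlt|].
Qed.

Lemma nyldon_neq_nil w : nyldon w -> w <> [::].
Proof. by move=> H E; subst. Qed.

Lemma nyldon_fact_mem w L x : nyldon_fact w L -> x \in L -> nyldon x.
Proof. by case=> _ /allP H _ /H. Qed.

Lemma nyldon_fact_nil_notin w L : nyldon_fact w L -> [::] \notin L.
Proof. by move=> HL; apply/negP => /(nyldon_fact_mem HL). Qed.

Lemma nyldon_fact_catl w L1 L2 : nyldon_fact w (L1 ++ L2) -> nyldon_fact (flatten L1) L1.
Proof. by case=> _; rewrite all_cat => /andP [H1 _] /cat_sorted2 []. Qed.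

Lemma nyldon_fact_catr w L1 L2 : nyldon_fact w (L1 ++ L2) -> nyldon_fact (flatten L2) L2.
Proof. by case=> _; rewrite all_cat => /andP [_ H2] /cat_sorted2 []. Qed.

Lemma nyldon_fact_nil L : nyldon_fact [::] L -> L = [::].
Proof.
case: L => // x L /[dup] /nyldon_fact_nil_notin.
by rewrite inE negb_or => /andP [Hx _] [/= Hf _ _]; case: x Hx Hf.
Qed.

Lemma nyldon_fact_nyldonN w L : 1 < size L -> nyldon_fact w L -> ~~ nyldon w.
Proof.
move=> Hs HL; have Hn := nyldon_fact_nil_notin HL; case: HL => Hf Ha Hso.
have Hw : 1 < size w.
  rewrite -Hf; case: L Hn Hs {Hf Ha Hso} => [|x [|y L]] //.
  rewrite !inE !negb_or => /and3P [Hx Hy _] _ /=.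
  by case: x Hx => // ? ? _; case: y Hy => // ? ? _; rewrite /= size_cat /= addnS.
by rewrite nyldonE // negbK; apply/hasP; exists L; rewrite ?Hs ?Ha //; apply: mem_parts.
Qed.

Lemma nyldonN_fact w : 1 < size w -> ~~ nyldon w ->
  exists2 L, nyldon_fact w L & 1 < size L.
Proof.
move=> Hw; rewrite nyldonE // negbK.
by case/hasP => p /partsP [Hf _] /andP [/andP [Hs Ha] Hso]; exists p.
Qed.

Lemma nyldon_fact_exists w : exists L, nyldon_fact w L.
Proof.
case Hn: (nyldon w); first by exists [:: w]; split; rewrite /= ?cats0 ?Hn.
case: w Hn => [|x [|y w]] Hn; [by exists [::] | by [] |].
by case: (nyldonN_fact (w := [:: x, y & w]) erefl (negbT Hn)) => L; exists L.
Qed.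

(** * Uniqueness and the absorption criterion *)

(* The right-to-left greedy factorization merges the current prefix [P] with the
   next factor [b] exactly when [b] is strictly smaller than [P]. *)
Fixpoint absorbs (P : word) (L : seq word) : bool :=
  if L is b :: L' then ~~ lexle P b && absorbs (P ++ b) L' else true.

Lemma absorbs_cat P L1 L2 :
  absorbs P (L1 ++ L2) = absorbs P L1 && absorbs (P ++ flatten L1) L2.
Proof.
elim: L1 P => [|b L1 IH] P /=; first by rewrite cats0.
by rewrite IH catA andbA.
Qed.

Definition fact_unique w := forall L1 L2, nyldon_fact w L1 -> nyldon_fact w L2 -> L1 = L2.

Definition suffix_le w :=
  nyldon w -> forall p s, w = p ++ s -> p <> [::] -> nyldon s -> lexle s w.

Definition suffix_size_le w := forall L x p s,
  nyldon_fact w (rcons L x) -> w = p ++ s -> nyldon s -> size s <= size x.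

Definition cons_absorbs w := forall c y L,
  w = c :: y -> nyldon_fact y L -> nyldon w = absorbs [:: c] L.

Definition nyldon_props w :=
  [/\ fact_unique w, suffix_le w, suffix_size_le w & cons_absorbs w].

Lemma suffix_fact_last_le b z r : suffix_le b -> nyldon b -> b = z ++ r -> r <> [::] ->
  exists D d, nyldon_fact r (rcons D d) /\ lexle d b.
Proof.
move=> Sb Hb Eb Hr; case: z Eb => [|c z] Eb.
  rewrite /= in Eb; subst b; exists [::], r; split; last exact: lexle_refl.
  by split; rewrite /= ?cats0 ?Hb.
have [D HD] := nyldon_fact_exists r.
case: (lastP D) HD => [|D0 d] HD; first by case: HD => /= Er; rewrite Er in Hr.
exists D0, d; split=> //; apply: (Sb Hb (c :: z ++ flatten D0)) => //.
- by rewrite Eb; case: HD => <- _ _; rewrite flatten_rcons catA.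
- by apply: (nyldon_fact_mem HD); rewrite mem_rcons mem_head.
Qed.

Lemma sorted_nyldon_suffix_size_le (G : seq word) x p s :
  sorted lexle (rcons G x) -> all nyldon (rcons G x) -> {in G, forall g, suffix_le g} ->
  flatten (rcons G x) = p ++ s -> nyldon s -> size s <= size x.
Proof.
elim: G p => [|g G IH] p Hso Ha HS E Hs.
  by move: E; rewrite /= cats0 => ->; rewrite size_cat leq_addl.
have Hg : nyldon g by case/andP: Ha.
move: E; rewrite [flatten _]/= => E.
case: (leqP (size g) (size p)) => Hgp.
  have [r Ep Er] := eq_cat_split E Hgp.
  apply: (IH r) Er Hs; first exact: path_sorted Hso.
  - by case/andP: Ha.
  - by move=> g' Hg'; apply: HS; rewrite in_cons Hg' orbT.
have [y0 Eg Es] := eq_cat_split (esym E) (ltnW Hgp).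
have Hy0 : y0 <> [::] by move=> E0; move: Hgp; rewrite Eg E0 cats0 ltnn.
have [D [d [[HDf HDa HDs] Hdg]]] := suffix_fact_last_le (HS g (mem_head _ _)) Hg Eg Hy0.
suff : ~~ nyldon s by rewrite Hs.
apply: (nyldon_fact_nyldonN (L := rcons D d ++ rcons G x)).
  by rewrite size_cat !size_rcons addnS.
split; first by rewrite flatten_cat HDf Es.
- by rewrite all_cat HDa; case/andP: Ha.
- exact: sorted_rcons_cat lexle_trans HDs Hso Hdg.
Qed.

Section StrongInduction.

Variable w : word.
Hypothesis IH : forall v, size v < size w -> nyldon_props v.

Lemma nyldon_fact_suffix_head_le b L z r G :
  size (flatten (b :: L)) < size w -> nyldon_fact (flatten (b :: L)) (b :: L) ->
  b = z ++ r -> r <> [::] -> nyldon_fact (r ++ flatten L) G -> lexle (head [::] G) b.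
Proof.
move=> Hsz HL Eb Hr HG.
have Hb : nyldon b by apply: (nyldon_fact_mem HL); rewrite mem_head.
have Hbw : size b < size w by apply: leq_ltn_trans Hsz; rewrite /= size_cat leq_addr.
have [_ Sb _ _] := IH Hbw.
have [Ur _ _ _] : nyldon_props (r ++ flatten L).
  by apply: IH; apply: leq_ltn_trans Hsz; rewrite /= Eb !size_cat leq_add2r leq_addl.
have [D [d [[HDf HDa HDs] Hdb]]] := suffix_fact_last_le Sb Hb Eb Hr.
case: HL => _ /andP [_ HLa] HLs.
rewrite (Ur G (rcons D d ++ L)) //; last first.
  split; first by rewrite flatten_cat HDf.
  - by rewrite all_cat HDa.
  - exact: sorted_rcons_cat lexle_trans HDs HLs Hdb.
have Hhd := sorted_head_rcons lexle_refl lexle_trans HDs.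
by case: D {HDf HDa HDs} Hhd => [|d0 D] Hhd; apply: lexle_trans Hhd Hdb.
Qed.

Lemma absorbs_nlexle_head P L z G : size (flatten L) < size w ->
  nyldon_fact (flatten L) L -> absorbs P L -> z ++ flatten G = flatten L ->
  nyldon_fact (flatten G) G -> G <> [::] -> ~~ lexle (P ++ z) (head [::] G).
Proof.
elim: L P z => [|b L IHL] P z Hsz HL Hab E HG Gne.
  move: E => /(congr1 size); rewrite size_cat /= => /eqP.
  rewrite addn_eq0 !size_eq0 => /andP [_ /eqP EG].
  by case: Gne; apply: nyldon_fact_nil; rewrite -EG.
move: Hab => /= /andP [Hpb Hab].
change (flatten (b :: L)) with (b ++ flatten L) in E.
case: (leqP (size b) (size z)) => Hbz.
  have [r Ez Er] := eq_cat_split (esym E) Hbz.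
  rewrite Ez catA; apply: (IHL (P ++ b) r) => //.
  - by apply: leq_ltn_trans Hsz; rewrite /= size_cat leq_addl.
  - exact: (nyldon_fact_catr (L1 := [:: b]) HL).
have [r Eb Er] := eq_cat_split E (ltnW Hbz).
have Hr : r <> [::] by move=> Er0; move: Hbz; rewrite Eb Er0 cats0 ltnn.
have Hhb : lexle (head [::] G) b.
  by apply: (nyldon_fact_suffix_head_le Hsz HL Eb Hr); rewrite -Er.
apply/negP => Hle; move: (nlexle_catl z Hpb).
by rewrite (lexle_trans Hle Hhb).
Qed.

Lemma absorbs_nyldon c y L : w = c :: y -> nyldon_fact y L -> absorbs [:: c] L -> nyldon w.
Proof.
move=> Ew HL Hab; case Hn: (nyldon w) => //.
case: L HL Hab => [|b L] HL Hab.
  by move: Hn; case: HL => /= Ey _ _; rewrite Ew -Ey.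
have Hb : b <> [::] by apply: nyldon_neq_nil (nyldon_fact_mem HL (mem_head _ _)).
have Hw : 1 < size w.
  rewrite Ew; case: HL => <- _ _; rewrite /= size_cat ltnS addn_gt0 lt0n size_eq0.
  by apply/orP; left; apply/eqP.
have [[|g [|h G]] // HG0 _] := nyldonN_fact Hw (negbT Hn).
have Hg : g <> [::] by apply: nyldon_neq_nil (nyldon_fact_mem HG0 (mem_head _ _)).
have HG := nyldon_fact_catr (L1 := [:: g]) HG0.
case: HG0 Hg => Hf _ /andP [Hle _]; case: g Hf Hle => [//|c' z] Hf Hle _.
move: Hf; rewrite Ew [flatten _]/= => -[Ec Ey]; subst c.
have Hfy : flatten (b :: L) = y by case: HL.
have Hsz : size (flatten (b :: L)) < size w by rewrite Ew Hfy.
rewrite -Hfy in HL Ey.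
have /negP[] : ~~ lexle ([:: c'] ++ z) (head [::] (h :: G)).
  by apply: (absorbs_nlexle_head (G := h :: G) Hsz HL Hab Ey HG).
exact: Hle.
Qed.

Lemma nyldon_absorbs c y L : w = c :: y -> nyldon_fact y L -> nyldon w -> absorbs [:: c] L.
Proof.
move=> Ew HL Hw.
have step L1 b L2 : L1 ++ b :: L2 = L -> absorbs [:: c] L1 -> ~~ lexle (c :: flatten L1) b.
  (* Otherwise [c :: flatten L1], [b], [L2] would be a nondecreasing factorization. *)
  move=> EL Hab; apply/negP => Hle; rewrite -EL in HL.
  have HL1 := nyldon_fact_catl HL; have HL2 := nyldon_fact_catr HL.
  have Hb := nyldon_fact_mem HL2 (mem_head _ _).
  have Ey : y = flatten L1 ++ b ++ flatten L2 by case: HL => <-; rewrite flatten_cat.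
  have Hsz : size (c :: flatten L1) < size w.
    have : 0 < size b by case: (b) (nyldon_neq_nil Hb).
    rewrite Ew Ey /= !size_cat; lia.
  have [_ _ _ C1] := IH Hsz.
  have HP : nyldon (c :: flatten L1) by rewrite (C1 c _ L1 erefl HL1).
  apply: (negP (nyldon_fact_nyldonN (L := (c :: flatten L1) :: b :: L2) _ _)) Hw => //.
  case: HL2 => Hf2 Ha2 Hs2; split.
  - by rewrite Ew Ey.
  - by rewrite /= HP.
  - by apply/andP; split.
suff: forall L2 L1, L1 ++ L2 = L -> absorbs [:: c] L1 -> absorbs [:: c] L.
  by move/(_ L [::]); apply.
elim=> [|b L2 IHL] L1 EL Hab; first by rewrite -EL cats0.
apply: (IHL (rcons L1 b)); first by rewrite cat_rcons.
by rewrite -cats1 absorbs_cat Hab andTb; apply/andP; split; first exact: step EL Hab.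
Qed.

Lemma nyldon_cons_absorbs : cons_absorbs w.
Proof.
move=> c y L Ew HL.
by apply/idP/idP; [exact: nyldon_absorbs Ew HL | exact: absorbs_nyldon Ew HL].
Qed.

Lemma nyldon_suffix_le : suffix_le w.
Proof.
move=> Hw p s E Hp Hs; case: p E Hp => [//|c p] E _.
have Hy : size (p ++ s) < size w by rewrite E.
have [L HL] := nyldon_fact_exists (p ++ s).
case: (lastP L) HL => [|L0 bq] HL.
  by case: HL => /= /esym/eqP; rewrite -size_eq0 size_cat addn_eq0 => /andP [_ /eqP Es]; rewrite /nyldon Es in Hs.
have [_ _ Ly _] := IH Hy.
have Hbq : nyldon bq by apply: (nyldon_fact_mem HL); rewrite mem_rcons mem_head.
have Ey : p ++ s = flatten L0 ++ bq by case: HL => <-; rewrite flatten_rcons.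
have Hle : size (flatten L0) <= size p.
  by move: (congr1 size Ey) (Ly L0 bq p s HL erefl Hs); rewrite !size_cat; lia.
have [r Ep Ebq] := eq_cat_split (esym Ey) Hle.
have := nyldon_cons_absorbs E HL; rewrite Hw -cats1 absorbs_cat => /esym/andP [_].
move=> /andP [/nlexle_ge Hbq_lt _].
have E' : w = c :: flatten L0 ++ bq by rewrite -Ey.
have Hbw : lexle bq w by apply: lexle_trans Hbq_lt _; rewrite E'; exact: lexle_prefix.
case: r Ep Ebq => [|x r] Ep Ebq; first by rewrite Ebq in Hbw.
have Hsbq : size bq < size w by rewrite E' /= size_cat ltnS leq_addl.
have [_ Sbq _ _] := IH Hsbq.
exact: lexle_trans (Sbq Hbq (x :: r) s Ebq _ Hs) Hbw.
Qed.

Lemma nyldon_suffix_size_le : suffix_size_le w.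
Proof.
move=> L x p s [Hf Ha Hso] E Hs.
apply: (sorted_nyldon_suffix_size_le Hso Ha _ (etrans Hf E) Hs) => g Hg.
have Hx : x <> [::] by apply: nyldon_neq_nil; move: Ha; rewrite all_rcons => /andP [].
have [] // := IH (v := g); apply: leq_ltn_trans (size_mem_flatten Hg) _.
by rewrite -Hf flatten_rcons size_cat -[X in X < _]addn0 ltn_add2l lt0n size_eq0; apply/eqP.
Qed.

Lemma nyldon_fact_unique : fact_unique w.
Proof.
move=> L1 L2 H1 H2; have [Ew|Hw] := eqVneq w [::].
  by rewrite Ew in H1 H2; rewrite (nyldon_fact_nil H1) (nyldon_fact_nil H2).
case: (lastP L1) H1 => [|A x] H1; first by case: H1 Hw => <-.
case: (lastP L2) H2 => [|B z] H2; first by case: H2 Hw => <-.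
have Hx : nyldon x by apply: (nyldon_fact_mem H1); rewrite mem_rcons mem_head.
have Hz : nyldon z by apply: (nyldon_fact_mem H2); rewrite mem_rcons mem_head.
have E1 : w = flatten A ++ x by case: H1 => <-; rewrite flatten_rcons.
have E2 : w = flatten B ++ z by case: H2 => <-; rewrite flatten_rcons.
have Hzx := nyldon_suffix_size_le H1 E2 Hz.
have Hxz := nyldon_suffix_size_le H2 E1 Hx.
have Hsz : size (flatten A) = size (flatten B).
  by move: (congr1 size E1) (congr1 size E2); rewrite !size_cat; lia.
move: (E1); rewrite E2 => /eqP; rewrite eqseq_cat // => /andP [/eqP EBA /eqP Ezx].
subst z; have HsA : size (flatten A) < size w.
  by rewrite E1 size_cat -[X in X < _]addn0 ltn_add2l lt0n size_eq0; apply/eqP/nyldon_neq_nil.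
have [UA _ _ _] := IH HsA.
rewrite (UA A B) //; last rewrite -EBA.
  all: by apply: (@nyldon_fact_catl w _ [:: x]); rewrite cats1.
Qed.

End StrongInduction.

Theorem nyldon_props_all w : nyldon_props w.
Proof.
have [n] := ubnP (size w); elim: n w => // n IHn w Hw.
have IH v : size v < size w -> nyldon_props v.
  by move=> Hv; apply: IHn; apply: leq_trans Hv _.
split; [exact: nyldon_fact_unique | exact: nyldon_suffix_le | exact: nyldon_suffix_size_le
       | exact: nyldon_cons_absorbs].
Qed.

Theorem nyldon_fact_uniq w L1 L2 : nyldon_fact w L1 -> nyldon_fact w L2 -> L1 = L2.
Proof. by case: (nyldon_props_all w) => U _ _ _; apply: U. Qed.

Theorem nyldon_consE c y L : nyldon_fact y L -> nyldon (c :: y) = absorbs [:: c] L.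
Proof. by case: (nyldon_props_all (c :: y)) => _ _ _ C; apply: C. Qed.

Definition nyldon_last (u r : word) :=
  nyldon u /\ exists L, nyldon_fact (behead u) (rcons L r).

Lemma nyldon_last_cat u r v : nyldon_last u r -> nyldon v ->
  ~~ lexle u v -> lexle r v -> nyldon_last (u ++ v) v.
Proof.
move=> [Hu [L HL]] Hv Huv Hrv; case: u Hu HL Huv => [//|c y] Hu HL Huv /=.
have HL' : nyldon_fact (y ++ v) (rcons (rcons L r) v).
  case: HL => Hf Ha Hs; split.
  - by rewrite flatten_rcons Hf.
  - by rewrite all_rcons Hv.
  - by rewrite sorted_rcons2 Hs.
split; last by exists (rcons L r).
rewrite -cat_cons (nyldon_consE _ HL') -cats1 absorbs_cat -(nyldon_consE _ HL) Hu andTb.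
by case: HL => -> _ _; rewrite /= Huv.
Qed.

Fixpoint absorb (P : word) (L : seq word) : seq word :=
  if L is b :: L' then (if lexle P b then P :: L else absorb (P ++ b) L') else [:: P].

Definition nyldon_factorization (w : word) : seq word :=
  foldr (fun c L => absorb [:: c] L) [::] w.

Lemma absorb_fact c L1 L2 : nyldon_fact (flatten (L1 ++ L2)) (L1 ++ L2) ->
  absorbs [:: c] L1 -> nyldon_fact (c :: flatten (L1 ++ L2)) (absorb (c :: flatten L1) L2).
Proof.
elim: L2 L1 => [|b L2 IH] L1 HL Hab.
  rewrite cats0 in HL *; have HP : nyldon (c :: flatten L1) by rewrite (nyldon_consE _ HL).
  by split; rewrite /= ?cats0 ?HP.
have HP : nyldon (c :: flatten L1) by rewrite (nyldon_consE _ (nyldon_fact_catl HL)).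
rewrite [absorb _ _]/=; case: ifP => Hle.
  have [Hf2 Ha2 Hs2] := nyldon_fact_catr HL.
  by split; rewrite ?flatten_cat //= ?HP // Hle.
rewrite -cat_rcons in HL *; rewrite -(flatten_rcons L1 b); apply: IH => //.
by rewrite -cats1 absorbs_cat Hab andTb; apply/andP; split; first exact/negbT.
Qed.

Lemma nyldon_factorizationP w : nyldon_fact w (nyldon_factorization w).
Proof.
elim: w => [|c w IH] /=; first by split.
have Hf : flatten (nyldon_factorization w) = w by case: IH.
by have := @absorb_fact c [::] (nyldon_factorization w); rewrite cat0s Hf; apply.
Qed.

Lemma nyldon_factorization_nyldon w : nyldon_factorization w = [:: w] -> nyldon w.
Proof. by move=> H; have := nyldon_factorizationP w; rewrite H => -[_ /andP []]. Qed.

(** * Thue-Morse blocks *)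

Definition tme j := TM (2 * j).
Definition ctme j := compl (tme j).
Definition ctme' j := dropLast (ctme j).

Lemma compl_cat x y : compl (x ++ y) = compl x ++ compl y.
Proof. exact: map_cat. Qed.

Lemma complK x : compl (compl x) = x.
Proof. by rewrite /compl -map_comp map_id_in // => c _ /=; rewrite negbK. Qed.

Lemma tmeS j : tme j.+1 = tme j ++ ctme j ++ ctme j ++ tme j.
Proof. by rewrite /ctme /tme mulnS /= !compl_cat complK -!catA. Qed.

Lemma ctmeS j : ctme j.+1 = ctme j ++ tme j ++ tme j ++ ctme j.
Proof. by rewrite /ctme tmeS !compl_cat complK. Qed.

Lemma dropLast_rcons (s : word) x : dropLast (rcons s x) = s.
Proof. by rewrite /dropLast size_rcons /= -cats1 take_size_cat. Qed.

Lemma ctme_rcons j : ctme j = rcons (ctme' j) lb.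
Proof.
have [s Hs] : exists s, tme j = rcons s la.
  elim: j => [|j [s Hs]]; first by exists [::].
  by exists (tme j ++ ctme j ++ ctme j ++ s); rewrite tmeS Hs !rcons_cat.
by rewrite /ctme' /ctme Hs /compl map_rcons dropLast_rcons.
Qed.

Lemma ctme'S j : ctme' j.+1 = ctme j ++ tme j ++ tme j ++ ctme' j.
Proof. by apply: (@rcons_injl _ lb); rewrite -ctme_rcons ctmeS !rcons_cat -ctme_rcons. Qed.

Lemma tme_head j : exists s, tme j = la :: s.
Proof. by elim: j => [|j [s Hs]]; [exists [::] | rewrite tmeS Hs; eexists]. Qed.

Lemma ctme'_head j : exists s, ctme' j.+1 = lb :: s.
Proof. by rewrite ctme'S /ctme; case: (tme_head j) => s ->; eexists. Qed.

(* A word over the atoms [0], [1], [2] stands at level [j] for the concatenation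
   of [tme j], [ctme' j] and the letter [b] respectively; rewriting
   [tme (j+1)] and [ctme' (j+1)] in level-[j] atoms gives the expansion. *)
Definition atom_word j (a : nat) : word :=
  match a with 0 => tme j | 1 => ctme' j | _ => [:: lb] end.

Definition atoms_word j (A : seq nat) : word := flatten (map (atom_word j) A).

Lemma atoms_word_cat j A B : atoms_word j (A ++ B) = atoms_word j A ++ atoms_word j B.
Proof. by rewrite /atoms_word map_cat flatten_cat. Qed.

Definition expand_atom (a : nat) : seq nat :=
  match a with 0 => [:: 0; 1; 2; 1; 2; 0] | 1 => [:: 1; 2; 0; 0; 1] | _ => [:: 2] end.

Definition expand (A : seq nat) : seq nat := flatten (map expand_atom A).

Lemma atoms_word_expand j A : atoms_word j.+1 A = atoms_word j (expand A).
Proof.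
elim: A => [|a A IH] //; rewrite /expand /= -/(expand A) atoms_word_cat -IH.
congr (_ ++ _); case: a => [|[|a]] //=.
- by rewrite tmeS !ctme_rcons /atoms_word /= !cats0 -!cats1 -!catA.
- by rewrite ctme'S !ctme_rcons /atoms_word /= !cats0 -!cats1 -!catA.
Qed.

Lemma atoms_word_expandn n j A : atoms_word (n + j) A = atoms_word j (iter n expand A).
Proof. by elim: n A => [|n IH] A //=; rewrite atoms_word_expand IH -iterSr. Qed.

Definition atom_head (a : nat) : letter := a != 0.

(* A sound but incomplete comparison: it only decides [A] versus [B] when the
   first differing atoms already differ in their first letter. *)
Fixpoint cmp_atoms (A B : seq nat) : option bool :=
  match A, B with
  | [::], _ => Some true
  | _ :: _, [::] => Some false
  | x :: A', y :: B' =>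
      if x == y then cmp_atoms A' B'
      else if atom_head x == atom_head y then None else Some (~~ atom_head x)
  end.

Lemma atom_word_head j a : exists s, atom_word j.+1 a = atom_head a :: s.
Proof. by case: a => [|[|a]] /=; [exact: tme_head | exact: ctme'_head | eexists]. Qed.

Lemma cmp_atomsP j A B r :
  cmp_atoms A B = Some r -> lexle (atoms_word j.+1 A) (atoms_word j.+1 B) = r.
Proof.
elim: A B r => [|x A IH] [|y B] r /=; [by case=> <- | by case=> <- | |].
  by case=> <-; case: (atom_word_head j x) => s; rewrite /atoms_word /= => ->.
case: eqP => [->|Hxy].
  by move=> H; rewrite /atoms_word /= lexle_cat2l; apply: IH.
case: eqP => // Hh [<-]; rewrite /atoms_word /=.
case: (atom_word_head j x) => s ->; case: (atom_word_head j y) => s' -> /=.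
by move: Hh; rewrite /ltl; case: (atom_head x); case: (atom_head y).
Qed.

(** * A certified family of Nyldon words *)

(* A certificate found by computer search.  At level [j], [tme_a n] and [ctme'_a n]
   stand for [tme (n + j)] and [ctme' (n + j)].  For [i < 11] and [j >= 2], [famword i j]
   is Nyldon and the Nyldon factorization of its tail ends with
   [famword (rpart i) (j - rdrop i)]; for [j >= 3] the word [famword i j] is
   [famword (lpart i) (j - ldrop i)] followed by [famword (rpart i) (j - rdrop i)],
   which lets [nyldon_last_cat] propagate the property from level [j - 1] to [j]. *)
Definition tme_a n := iter n expand [:: 0].
Definition ctme'_a n := iter n expand [:: 1].

Definition shape (i : nat) : seq nat :=
  match i with
  | 0 => 2 :: tme_a 2
  | 1 => 2 :: tme_a 1 ++ ctme'_a 2 ++ [:: 2]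
  | 2 => 2 :: tme_a 1 ++ ctme'_a 2 ++ 2 :: ctme'_a 2
  | 3 => 2 :: tme_a 1 ++ ctme'_a 1 ++ 2 :: ctme'_a 1
  | 4 => 2 :: tme_a 1 ++ ctme'_a 1
  | 5 => 2 :: tme_a 1 ++ tme_a 1 ++ ctme'_a 1 ++ [:: 2]
  | 6 => 2 :: tme_a 1 ++ tme_a 2 ++ tme_a 1 ++ ctme'_a 1
  | 7 => 2 :: tme_a 0 ++ ctme'_a 1
  | 8 => 2 :: tme_a 1 ++ tme_a 0 ++ ctme'_a 0 ++ 2 :: ctme'_a 0
  | 9 => 2 :: tme_a 1 ++ tme_a 1 ++ ctme'_a 1 ++ 2 :: ctme'_a 1
  | _ => 2 :: tme_a 1 ++ tme_a 1 ++ ctme'_a 1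
  end.

Definition lpart i := nth 0 [:: 3; 4; 4; 3; 3; 8; 9; 4; 3; 8; 8] i.
Definition ldrop i := nth 0 [:: 0; 0; 0; 1; 1; 0; 0; 1; 1; 0; 0] i.
Definition rpart i := nth 0 [:: 0; 5; 6; 2; 7; 1; 10; 10; 9; 2; 7] i.
Definition rdrop i := nth 0 [:: 1; 0; 0; 1; 0; 1; 0; 1; 1; 1; 0] i.

Definition famword i j := atoms_word j (shape i).

Definition fam_ok i j := nyldon_last (famword i j) (famword (rpart i) (j - rdrop i)).

Definition shape_at x d := iter (2 - d) expand (shape x).

Definition split_ok i :=
  [&& [&& ldrop i <= 1, rdrop i <= 1 & rdrop (lpart i) <= 1],
      iter 2 expand (shape i) == shape_at (lpart i) (ldrop i) ++ shape_at (rpart i) (rdrop i),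
      cmp_atoms (shape_at (lpart i) (ldrop i)) (shape_at (rpart i) (rdrop i)) == Some false &
      cmp_atoms (shape_at (rpart (lpart i)) (ldrop i + rdrop (lpart i)))
                (shape_at (rpart i) (rdrop i)) == Some true].

Lemma famword_level j x d : d <= 2 -> famword x (j.+3 - d) = atoms_word j.+1 (shape_at x d).
Proof. by move=> Hd; rewrite /famword /shape_at -atoms_word_expandn; congr atoms_word; lia. Qed.

Lemma fam_ok_split j i : split_ok i -> fam_ok (lpart i) (j.+3 - ldrop i) ->
  nyldon (famword (rpart i) (j.+3 - rdrop i)) -> fam_ok i j.+3.
Proof.
case/and4P=> /and3P [B1 B2 B3] /eqP E1 /eqP E2 /eqP E3 Gu Nv.
move: Gu Nv; rewrite /fam_ok -subnDA !famword_level; try lia.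
have -> : famword i j.+3 = atoms_word j.+1 (iter 2 expand (shape i)).
  by rewrite -atoms_word_expandn.
rewrite E1 atoms_word_cat => Gu Nv; apply: nyldon_last_cat Gu Nv _ _.
- by rewrite (cmp_atomsP _ E2).
- by rewrite (cmp_atomsP _ E3).
Qed.

Definition nyldon_last_check (u r : word) :=
  [&& nyldon_factorization u == [:: u], nyldon_factorization (behead u) != [::] &
      last [::] (nyldon_factorization (behead u)) == r].

Lemma nyldon_last_checkP u r : nyldon_last_check u r -> nyldon_last u r.
Proof.
case/and3P => /eqP H1 H2 /eqP H3; split; first exact: nyldon_factorization_nyldon.
have := nyldon_factorizationP (behead u).
case: (nyldon_factorization (behead u)) H2 H3 => [//|x L] _ H3.
by exists (belast x L); rewrite -H3 -lastI.
Qed.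

Lemma fam_ok_base i : i < 11 -> fam_ok i 2.
Proof.
move=> Hi; apply: nyldon_last_checkP.
have : all (fun i => nyldon_last_check (famword i 2) (famword (rpart i) (2 - rdrop i)))
           (iota 0 11) by vm_compute.
by move/allP; apply; rewrite mem_iota.
Qed.

Lemma split_ok_all i : i < 11 -> split_ok i.
Proof.
move=> Hi; have : all split_ok (iota 0 11) by vm_compute.
by move/allP; apply; rewrite mem_iota.
Qed.

Lemma fam_ok_succ j : (forall i, i < 11 -> fam_ok i j.+2) -> forall i, i < 11 -> fam_ok i j.+3.
Proof.
move=> H; have step i : i < 11 -> fam_ok (lpart i) (j.+3 - ldrop i) ->
    nyldon (famword (rpart i) (j.+3 - rdrop i)) -> fam_ok i j.+3.
  by move/split_ok_all; apply: fam_ok_split.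
(* Parts with [ldrop i = 0] or [rdrop i = 0] live at the same level, hence this order. *)
have G3 := step 3 erefl (H 3 erefl) (proj1 (H 2 erefl)).
have G7 := step 7 erefl (H 4 erefl) (proj1 (H 10 erefl)).
have G8 := step 8 erefl (H 3 erefl) (proj1 (H 9 erefl)).
have G4 := step 4 erefl (H 3 erefl) (proj1 G7).
have G9 := step 9 erefl G8 (proj1 (H 2 erefl)).
have G10 := step 10 erefl G8 (proj1 G7).
have G5 := step 5 erefl G8 (proj1 (H 1 erefl)).
have G6 := step 6 erefl G9 (proj1 G10).
have G0 := step 0 erefl G3 (proj1 (H 0 erefl)).
have G1 := step 1 erefl G4 (proj1 G5).
have G2 := step 2 erefl G4 (proj1 G6).
by case=> [|[|[|[|[|[|[|[|[|[|[|]]]]]]]]]]].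
Qed.

Lemma fam_ok_all j i : i < 11 -> fam_ok i j.+2.
Proof. by elim: j i => [|j IH] i Hi; [exact: fam_ok_base | exact: fam_ok_succ]. Qed.

Lemma famword0 j : famword 0 j = lb :: tme j.+2.
Proof.
have -> : tme j.+2 = atoms_word (2 + j) [:: 0] by rewrite /atoms_word /= cats0.
by rewrite atoms_word_expandn.
Qed.

Lemma famword1 j : famword 1 j = lb :: tme j.+1 ++ ctme j.+2.
Proof.
have -> : tme j.+1 = atoms_word (1 + j) [:: 0] by rewrite /atoms_word /= cats0.
have -> : ctme j.+2 = atoms_word (2 + j) [:: 1; 2] by rewrite ctme_rcons /atoms_word /= cats1.
by rewrite !atoms_word_expandn -atoms_word_cat.
Qed.

Lemma famword2 j : famword 2 j = famword 1 j ++ ctme' j.+2.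
Proof.
have -> : ctme' j.+2 = atoms_word (2 + j) [:: 1] by rewrite /atoms_word /= cats0.
by rewrite atoms_word_expandn -atoms_word_cat.
Qed.

Lemma famword2_le0 j : lexle (famword 2 j) (famword 0 j).
Proof. by case: j => [|j]; [vm_compute | apply: cmp_atomsP; vm_compute]. Qed.

Lemma famword_nyldon i j : i < 11 -> 1 < j -> nyldon (famword i j).
Proof. by move=> Hi; case: j => [|[|j]] // _; case: (fam_ok_all j Hi). Qed.

(** * Nyldon factorizations of Thue-Morse words *)

Lemma tm_fact_step j L X : nyldon_fact (tme j ++ ctme j) (rcons L X) ->
  nyldon (X ++ ctme' j) -> nyldon (lb :: tme j) -> nyldon (lb :: tme j ++ ctme j.+1) ->
  lexle (X ++ ctme' j) (lb :: tme j) ->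
  nyldon_fact (tme j.+1) (L ++ [:: X ++ ctme' j; lb :: tme j]) /\
  nyldon_fact (tme j.+1 ++ ctme j.+1) (L ++ [:: X ++ ctme' j; lb :: tme j ++ ctme j.+1]).
Proof.
move=> [Hf Ha Hs] N1 N2 N3 Le.
have EL A B : L ++ [:: A; B] = rcons (rcons L A) B by rewrite -!cats1 -catA.
have HfL : flatten L ++ X = tme j ++ ctme j by rewrite -flatten_rcons.
have HaL : all nyldon L by move: Ha; rewrite all_rcons => /andP [].
have HsY : sorted lexle (rcons L (X ++ ctme' j)).
  case: (lastP L) Hs => [|L0 l] //; rewrite !sorted_rcons2 => /andP [-> H1] /=.
  exact: lexle_trans H1 (lexle_prefix _ _).
have Htm : tme j.+1 = (flatten L ++ X) ++ ctme' j ++ lb :: tme j.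
  by rewrite HfL tmeS [in ctme j ++ tme j]ctme_rcons -!catA cat_rcons.
split; split; rewrite EL ?all_rcons ?N1 ?N2 ?N3 ?HaL ?sorted_rcons2 ?HsY ?Le //.
- by rewrite !flatten_rcons Htm -!catA.
- by rewrite !flatten_rcons Htm -!catA.
- by apply: lexle_trans Le _; rewrite -cat_cons lexle_prefix.
Qed.

(* The last Nyldon factor of [tme K.+1 ++ ctme K.+1] = TM_{2K+3}. *)
Definition tm_last K : word := if K is K'.+1 then famword 1 K' else [:: lb; la; la; lb].

Lemma tm_step_conditions K :
  [/\ nyldon (tm_last K ++ ctme' K.+1), nyldon (lb :: tme K.+1),
      nyldon (lb :: tme K.+1 ++ ctme K.+2) & lexle (tm_last K ++ ctme' K.+1) (lb :: tme K.+1)].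
Proof.
case: K => [|K]; first by split; try apply: nyldon_factorization_nyldon; vm_compute.
rewrite [tm_last _]/= -famword2 -famword0 -famword1; split; last exact: famword2_le0.
all: by case: K => [|[|K]]; [apply: nyldon_factorization_nyldon; vm_compute
  | apply: nyldon_factorization_nyldon; vm_compute | apply: famword_nyldon].
Qed.

Lemma tm_fact_exists K : exists L, nyldon_fact (tme K.+1 ++ ctme K.+1) (rcons L (tm_last K)).
Proof.
elim: K => [|K [L HL]].
  exists [:: [:: la]; [:: lb]; [:: lb; la]].
  have -> : rcons [:: [:: la]; [:: lb]; [:: lb; la]] (tm_last 0) =
            nyldon_factorization (tme 1 ++ ctme 1) by vm_compute.
  exact: nyldon_factorizationP.
have [N1 N2 N3 Le] := tm_step_conditions K.
have [_ H] := tm_fact_step HL N1 N2 N3 Le.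
rewrite -famword1 in H; exists (rcons L (tm_last K ++ ctme' K.+1)).
suff -> : forall A B : word, rcons (rcons L A) B = L ++ [:: A; B] by [].
by move=> A B; rewrite -!cats1 -catA.
Qed.

Theorem theorem4 (k : nat) (L : seq word) (xc : word) :
  2 <= k ->
  nyldon_fact (TM (2 * k - 1)) (rcons L xc) ->
  nyldon_fact (TM (2 * k))
    (L ++ [:: xc ++ dropLast (compl (TM (2 * k - 2))); lb :: TM (2 * k - 2)]) /\
  nyldon_fact (TM (2 * k + 1))
    (L ++ [:: xc ++ dropLast (compl (TM (2 * k - 2)));
              lb :: TM (2 * k - 2) ++ compl (TM (2 * k))]).
Proof.
case: k => [|[|K]] // _.
have -> : 2 * K.+2 - 1 = (2 * K.+1).+1 by lia.
have -> : 2 * K.+2 - 2 = 2 * K.+1 by lia.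
have -> : 2 * K.+2 + 1 = (2 * K.+2).+1 by lia.
move=> H; have [L' HL'] := tm_fact_exists K.
have [-> ->] := rcons_inj (nyldon_fact_uniq H HL').
have [N1 N2 N3 Le] := tm_step_conditions K.
exact: tm_fact_step HL' N1 N2 N3 Le.
Qed.
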